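(* Let $Q\subseteq\mathbb{R}^2$ be a convex polygon such that $\tau Q\subseteq Q^{\circ}$. Then the area of $Q^{\circ}$ is at least $3$.
   Context: $\tau:\mathbb{R}^2\to\mathbb{R}^2$ denotes the $90^\circ$ counterclockwise rotation. For a nonempty compact convex set $Q\subseteq\mathbb{R}^2$, its polar is $Q^{\circ}=\{x\in\mathbb{R}^2: y^\top x\le 1 \text{ for all } y\in Q\}$. *)

From mathcomp Require Import all_boot all_order all_algebra.
From mathcomp Require Import all_classical all_reals all_analysis.
Set Implicit Arguments. Unset Strict Implicit. Unset Printing Implicit Defensive.
Import Order.TTheory GRing.Theory Num.Theory.
Local Open Scope classical_set_scope.
Local Open Scope ring_scope.

Section Defs.
Context {R : realType}.

Definition dot2 (p q : R * R) : R := p.1 * q.1 + p.2 * q.2.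

(* tau : the 90-degree counterclockwise rotation. *)
Definition rot90 (p : R * R) : R * R := (- p.2, p.1).

Definition polar (Q : set (R * R)) : set (R * R) :=
  [set x | forall y, Q y -> dot2 y x <= 1].

Definition conv_hull (n : nat) (v : 'I_n -> R * R) : set (R * R) :=
  [set x | exists l : 'I_n -> R,
     [/\ forall i, 0 <= l i, \sum_(i < n) l i = 1 &
         x = (\sum_(i < n) l i * (v i).1, \sum_(i < n) l i * (v i).2)]].

Definition det2 (p q : R * R) : R := p.1 * q.2 - p.2 * q.1.

(* A convex polygon: convex hull of finitely many points, not all collinear
   (so that it is a genuine two-dimensional polygon). *)
Definition convex_polygon (Q : set (R * R)) : Prop :=
  exists (n : nat) (v : 'I_n -> R * R),
    Q = conv_hull v /\
    exists i j k : 'I_n,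
      det2 ((v j).1 - (v i).1, (v j).2 - (v i).2)
           ((v k).1 - (v i).1, (v k).2 - (v i).2) != 0.

Definition area (A : set (R * R)) : \bar R :=
  ((@lebesgue_measure R) \x (@lebesgue_measure R))%E A.

End Defs.

From mathcomp Require Import all_boot all_order all_algebra.
From mathcomp Require Import all_classical all_reals all_analysis.
From mathcomp Require Import ring lra.
Set Implicit Arguments. Unset Strict Implicit. Unset Printing Implicit Defensive.
Import Order.TTheory GRing.Theory Num.Theory.
Local Open Scope classical_set_scope.
Local Open Scope ring_scope.

(* Let V be the vertex set of Q. The hypothesis says det2 v v' <= 1 for all
   v, v' in V, hence for all v, v' in W = V u -V, and rot90 maps
   K = {z | det2 z w <= 1 for w in W} area-preservingly into the polar of Q.
   Pick x0, x1, x2 in W maximizing the area d0 + d1 + d2 of the hexagon with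
   vertices x0, x1, x2, -x0, -x1, -x2, where d0 = det2 x0 x1, d1 = det2 x1 x2,
   d2 = det2 x0 x2.  Comparing with the hexagons obtained by replacing one
   vertex by some w in W shows that the d_i are nonnegative and that K contains
   the x_i and the points (x0 + x1) / (d1 + d2), (x1 + x2) / (d0 + d2) and
   (x2 - x0) / (d0 + d1).  As K is convex and symmetric, it then contains the
   six quadrilaterals with vertices 0, two consecutive vertices of the hexagon
   and the one of these points or their opposites lying between them; they lie
   in disjoint angular sectors and have total area
   2 (d0 / (d1 + d2) + d1 / (d0 + d2) + d2 / (d0 + d1)) >= 3 by Nesbitt's
   inequality. *)

Section Det2.
Context {R : realType}.
Implicit Types p q r z : R * R.

Lemma det2C p q : det2 q p = - det2 p q.
Proof. by rewrite /det2; ring. Qed.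

Lemma det2Nl p q : det2 (- p) q = - det2 p q.
Proof. by rewrite /det2 /=; ring. Qed.

Lemma det2Nr p q : det2 p (- q) = - det2 p q.
Proof. by rewrite /det2 /=; ring. Qed.

Lemma det2xx p : det2 p p = 0.
Proof. by rewrite /det2 mulrC subrr. Qed.

Lemma det2_cramer p q r z :
  det2 q z * det2 p r = det2 p z * det2 q r + det2 r z * det2 p q.
Proof. by rewrite /det2; ring. Qed.

Lemma det2_shoelace p q r :
  det2 (q.1 - p.1, q.2 - p.2) (r.1 - p.1, r.2 - p.2) = det2 p q + det2 q r + det2 r p.
Proof. by rewrite /det2 /=; ring. Qed.

Lemma exists_det2_neq0 (I : Type) (v : I -> R * R) i j k :
  det2 ((v j).1 - (v i).1, (v j).2 - (v i).2)
       ((v k).1 - (v i).1, (v k).2 - (v i).2) != 0 ->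
  exists a b, det2 (v a) (v b) != 0.
Proof.
rewrite det2_shoelace.
have [->|] := eqVneq (det2 (v i) (v j)) 0; last by exists i, j.
have [->|] := eqVneq (det2 (v j) (v k)) 0; last by exists j, k.
have [->|] := eqVneq (det2 (v k) (v i)) 0; last by exists k, i.
by rewrite !addr0 eqxx.
Qed.

Definition lin2 (a b c d : R) (z : R * R) : R * R :=
  (a * z.1 + b * z.2, c * z.1 + d * z.2).

Lemma det2_lin2 (a b c d : R) p q :
  det2 (lin2 a b c d p) (lin2 a b c d q) = (a * d - b * c) * det2 p q.
Proof. by rewrite /det2 /lin2 /=; ring. Qed.

End Det2.

Section LebesgueLine.
Context {R : realType}.
Local Notation mu := (@lebesgue_measure R).

Lemma lebesgue_measure_shift (t : R) (A : set R) : measurable A ->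
  mu [set x | A (x + t)] = mu A.
Proof.
move=> mA; pose f : measurableTypeR R -> measurableTypeR R := fun x => x + t.
have mf : measurable_fun setT f by apply: measurable_realfun.measurable_funD.
rewrite -[LHS]/(pushforward mu f A) -(@lebesgue_measure_unique R (pushforward mu f)) //.
move=> _ [[a b]] _ <-; rewrite /pushforward /=.
transitivity (mu `]a - t, b - t]%classic); last first.
  by congr (mu _); apply/seteqP; split => x /=; rewrite /f !in_itv /= ltrBlDr lerBrDr.
rewrite !lebesgue_measure_itv /= !lte_fin ltrD2r.
by case: ifP => // _; rewrite -!EFinD opprB addrA subrK addrC.
Qed.

Lemma lebesgue_measure_dilate_pos (k : R) (A : set R) : 0 < k -> measurable A ->
  (k%:E * mu [set x | A (k * x)%R] = mu A)%E.
Proof.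
move=> k0 mA; pose f : measurableTypeR R -> measurableTypeR R := fun x => k * x.
have mf : measurable_fun setT f by apply: measurable_realfun.measurable_funM.
rewrite [RHS](@lebesgue_measure_unique R (mscale (NngNum (ltW k0)) (pushforward mu f))) //.
move=> _ [[a b]] _ <-; rewrite /mscale /pushforward /=.
transitivity (k%:E * mu `](a / k)%R, (b / k)%R]%classic)%E; last first.
  congr (_ * mu _)%E; apply/seteqP; split => x /=; rewrite /f !in_itv /=;
    by rewrite ltr_pdivrMr // ler_pdivlMr // ![x * k]mulrC.
rewrite !lebesgue_measure_itv /= !lte_fin ltr_pM2r ?invr_gt0 //.
case: ifP => _; last by rewrite mule0.
by rewrite -!EFinD -EFinM; congr (_%:E); field; exact: lt0r_neq0.
Qed.

Lemma lebesgue_measure_dilate (k : R) (A : set R) : k != 0 -> measurable A ->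
  (`|k|%:E * mu [set x | A (k * x)%R] = mu A)%E.
Proof.
move=> k0 mA; have [kgt0|klt0] := ltP 0 k.
  by rewrite gtr0_norm // lebesgue_measure_dilate_pos.
have mNA : measurable [set x | A (- x)].
  by rewrite -[X in measurable X]setTI; apply: measurable_realfun.measurable_funN.
have Nk0 : 0 < - k by rewrite oppr_gt0 lt_neqAle k0.
have muN : mu [set x | A (- x)] = mu A by exact: lebesgue_measureN mA.
rewrite ler0_norm // -muN -(lebesgue_measure_dilate_pos Nk0 mNA).
by congr (_ * mu _)%E; apply/seteqP; split => x /=; rewrite mulNr opprK.
Qed.

End LebesgueLine.

Section PlaneArea.
Context {R : realType}.
Local Notation mu := (@lebesgue_measure R).
Local Notation M2 := (measurableTypeR R * measurableTypeR R)%type.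

Lemma area_xsectionE (X : set M2) : area X = (\int[mu]_x mu (xsection X x))%E.
Proof. by []. Qed.

Lemma areaU (A B : set M2) : measurable A -> measurable B -> A `&` B = set0 ->
  area (A `|` B) = (area A + area B)%E.
Proof. by move=> mA mB AB; rewrite /area measureU. Qed.

Lemma le_area (A B : set M2) : measurable A -> measurable B -> A `<=` B ->
  (area A <= area B)%E.
Proof. by move=> mA mB AB; rewrite /area le_measure ?inE. Qed.

Lemma measurable_preimage (L : M2 -> M2) (X : set M2) :
  measurable_fun setT L -> measurable X -> measurable [set z | X (L z)].
Proof. by move=> mL mX; rewrite -[X in measurable X]setTI; exact: mL. Qed.

Lemma measurable_linear_form (a b : R) :
  measurable_fun setT (fun z : M2 => a * z.1 + b * z.2).
Proof.
by apply: measurable_realfun.measurable_funD; apply: measurable_realfun.measurable_funM.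
Qed.

Lemma measurable_lin2 (a b c d : R) : measurable_fun setT (lin2 a b c d : M2 -> M2).
Proof. by apply: measurable_fun_pair; exact: measurable_linear_form. Qed.

Lemma measurable_halfplane_le (a b c : R) :
  measurable [set z : M2 | a * z.1 + b * z.2 <= c].
Proof.
have := measurable_linear_form a b measurableT (measurable_itv `]-oo, c]).
by rewrite setTI; congr measurable; apply/seteqP; split => z /=; rewrite in_itv.
Qed.

Lemma measurable_halfplane_lt (a b c : R) :
  measurable [set z : M2 | a * z.1 + b * z.2 < c].
Proof.
have := measurable_linear_form a b measurableT (measurable_itv `]-oo, c[).
by rewrite setTI; congr measurable; apply/seteqP; split => z /=; rewrite in_itv.
Qed.

Lemma area_shear_y (c : R) (X : set M2) : measurable X ->
  area [set z | X (z.1, z.2 + c * z.1)] = area X.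
Proof.
move=> mX; rewrite !area_xsectionE; apply: eq_integral => x _.
rewrite -(@lebesgue_measure_shift _ (c * x) (xsection X x));
  last exact: measurable_xsection.
by congr (mu _); apply/seteqP; split => y; rewrite /xsection /= !inE.
Qed.

Lemma area_dilate_y (k : R) (X : set M2) : k != 0 -> measurable X ->
  (`|k|%:E * area [set z | X (z.1, k * z.2)%R] = area X)%E.
Proof.
move=> k0 mX; rewrite !area_xsectionE -ge0_integralZl //; last first.
  apply: measurable_fun_xsection.
  have := measurable_preimage (measurable_lin2 1 0 0 k) mX.
  by congr measurable; apply/seteqP; split => z; rewrite /lin2 /= !mul1r !mul0r addr0 add0r.
apply: eq_integral => x _.
rewrite -(lebesgue_measure_dilate (A := xsection X x) k0); last exact: measurable_xsection.
by congr (_ * mu _)%E; apply/seteqP; split => y; rewrite /xsection /= !inE.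
Qed.

Lemma area_swap (X : set M2) : measurable X -> area [set z | X (z.2, z.1)] = area X.
Proof.
move=> mX; have -> : area X = (mu \x^ mu)%E X.
  rewrite /area; apply: product_measure_unique => //= A B mA mB.
  by rewrite product_measure2E.
rewrite area_xsectionE /product_measure2 /=.
by congr (integral _ _ _); apply/funext => x; congr (mu _); apply/seteqP; split => y;
  rewrite /xsection /ysection /= !inE.
Qed.

Definition area_factor (L : M2 -> M2) (d : R) := measurable_fun setT L /\
  forall X : set M2, measurable X -> (`|d|%:E * area [set z | X (L z)] = area X)%E.

Lemma area_factor_comp L1 d1 L2 d2 :
  area_factor L1 d1 -> area_factor L2 d2 -> area_factor (L2 \o L1) (d1 * d2).
Proof.
move=> [mL1 h1] [mL2 h2]; split; first exact: measurableT_comp.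
move=> X mX; rewrite normrM EFinM (muleC `|d1|%:E) -muleA.
by rewrite (h1 [set w | X (L2 w)]) ?h2 //; exact: measurable_preimage.
Qed.

Lemma area_factor_shear_y c : area_factor (fun z => (z.1, z.2 + c * z.1)) 1.
Proof.
split; last by move=> X mX; rewrite normr1 mul1e area_shear_y.
apply: measurable_fun_pair; first exact: measurable_fst.
apply: measurable_realfun.measurable_funD => //.
exact: measurable_realfun.measurable_funM.
Qed.

Lemma area_factor_dilate_y k : k != 0 -> area_factor (fun z => (z.1, k * z.2)) k.
Proof.
move=> k0; split; last by move=> X mX; rewrite area_dilate_y.
apply: measurable_fun_pair; first exact: measurable_fst.
exact: measurable_realfun.measurable_funM.
Qed.

Lemma area_factor_swap : area_factor (fun z => (z.2, z.1)) (-1).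
Proof.
split; first exact: measurable_swap.
by move=> X mX; rewrite normrN normr1 mul1e area_swap.
Qed.

Lemma eq_area_factor L L' d d' :
  L =1 L' -> d = d' -> area_factor L d -> area_factor L' d'.
Proof. by move=> /funext -> ->. Qed.

Lemma area_factor_shear_x c : area_factor (fun z => (z.1 + c * z.2, z.2)) 1.
Proof.
apply: eq_area_factor (area_factor_comp (area_factor_comp area_factor_swap
  (area_factor_shear_y c)) area_factor_swap) => //.
by rewrite mulN1r mulrN1 opprK.
Qed.

Lemma area_factor_dilate_x k : k != 0 -> area_factor (fun z => (k * z.1, z.2)) k.
Proof.
move=> k0; apply: eq_area_factor (area_factor_comp (area_factor_comp area_factor_swap
  (area_factor_dilate_y k0)) area_factor_swap) => //.
by rewrite mulN1r mulrN1 opprK.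
Qed.

(* The map factors as a horizontal shear, two dilations and a vertical shear. *)
Lemma area_factor_linear_lead (a b c d : R) : a != 0 -> a * d - b * c != 0 ->
  area_factor (lin2 a b c d) (a * d - b * c).
Proof.
move=> a0 D0.
apply: eq_area_factor (area_factor_comp (area_factor_comp (area_factor_comp
  (area_factor_shear_x (b / a)) (area_factor_dilate_x a0))
  (area_factor_dilate_y (mulf_neq0 D0 (invr_neq0 a0)))) (area_factor_shear_y (c / a))).
  by move=> z; rewrite /lin2 /=; congr pair; field.
by field.
Qed.

Lemma area_factor_linear (a b c d : R) : a * d - b * c != 0 ->
  area_factor (lin2 a b c d) (a * d - b * c).
Proof.
move=> D0; have [a0|a0] := eqVneq a 0; last exact: area_factor_linear_lead.
have b0 : b != 0 by apply: contraNneq D0 => ->; rewrite a0 !mul0r subr0.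
have D0' : b * c - a * d != 0 by rewrite -oppr_eq0 opprB.
apply: eq_area_factor
  (area_factor_comp area_factor_swap (area_factor_linear_lead b0 D0')).
  by move=> z; rewrite /lin2 /=; congr pair; ring.
by ring.
Qed.

Lemma area_linear_preimage (a b c d : R) (X : set M2) :
  a * d - b * c != 0 -> measurable X ->
  area [set z | X (lin2 a b c d z)] =
  ((`|a * d - b * c|)^-1%:E * area X)%E.
Proof.
move=> D0 mX; have [_ /(_ X mX) <-] := area_factor_linear D0.
by rewrite muleA -EFinM mulVf ?mul1e // normr_eq0.
Qed.

End PlaneArea.

Section Triangles.
Context {R : realType}.
Local Notation mu := (@lebesgue_measure R).
Local Notation M2 := (measurableTypeR R * measurableTypeR R)%type.
Implicit Types p q z : R * R.

(* The triangle with vertices 0, p, q (when det2 p q > 0), with its edge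
   [0, q] removed so that triangles sharing an edge are disjoint. *)
Definition tri p q : set M2 :=
  [set z | 0 <= det2 p z /\ 0 < det2 z q /\ det2 p z + det2 z q <= det2 p q].

Lemma measurable_tri p q : measurable (tri p q).
Proof.
have -> : tri p q = [set z : M2 | p.2 * z.1 + (- p.1) * z.2 <= 0] `&`
  ([set z : M2 | (- q.2) * z.1 + q.1 * z.2 < 0] `&`
   [set z : M2 | (q.2 - p.2) * z.1 + (p.1 - q.1) * z.2 <= det2 p q]).
  by apply/seteqP; split => z; rewrite /tri /det2 /= => -[h1 [h2 h3]];
    (split; [|split]); lra.
apply: measurableI; first exact: measurable_halfplane_le.
by apply: measurableI; [exact: measurable_halfplane_lt | exact: measurable_halfplane_le].
Qed.

Lemma tri_det_gt0 p q z : tri p q z -> 0 < det2 p q.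
Proof. by rewrite /tri /= => -[h1 [h2 h3]]; lra. Qed.

Lemma tri0 p q : det2 p q <= 0 -> tri p q = set0.
Proof. by move=> pq; apply/seteqP; split => z // /tri_det_gt0; lra. Qed.

Lemma area_unit_square : area (`[0, 1] `*` `[0, 1] : set M2) = 1%E.
Proof.
rewrite /area product_measure1E; try exact: measurable_itv.
transitivity (mu `[0%R, 1%R] * mu `[0%R, 1%R])%E; first by [].
by rewrite lebesgue_measure_itv /= lte_fin ltr01 -EFinD subr0 mule1.
Qed.

Lemma measurable_diagonal : measurable [set z : M2 | z.2 = z.1].
Proof.
have -> : [set z : M2 | z.2 = z.1] =
    [set z : M2 | (-1) * z.1 + 1 * z.2 <= 0] `&` [set z : M2 | 1 * z.1 + (-1) * z.2 <= 0].
  by apply/seteqP; split => z /= => [e|[h1 h2]]; [split|]; lra.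
by apply: measurableI; exact: measurable_halfplane_le.
Qed.

Lemma area_diagonal : area [set z : M2 | z.2 = z.1] = 0%E.
Proof.
rewrite area_xsectionE -[RHS](integral0 mu setT); apply: eq_integral => x _.
apply/eqP; rewrite eq_le measure_ge0 andbT -(lebesgue_measure_set1 x).
apply: le_measure; rewrite ?inE //; first exact: measurable_xsection measurable_diagonal.
by move=> y; rewrite /xsection /= inE.
Qed.

Lemma area_tri_unit : area (tri (1, 0) (1, 1)) = (1 / 2)%:E.
Proof.
set T := tri (1, 0) (1, 1); set T' := [set z : M2 | T (z.2, z.1)].
set Sq : set M2 := `[0, 1] `*` `[0, 1].
set Dg := [set z : M2 | z.2 = z.1] `&` Sq.
have mT : measurable T := measurable_tri _ _.
have mT' : measurable T' by rewrite -[T']setTI; exact: measurable_swap.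
have mDg : measurable Dg.
  apply: measurableI; first exact: measurable_diagonal.
  by apply: measurableX; exact: measurable_itv.
have SqE : Sq = T `|` (T' `|` Dg).
  apply/seteqP; split => z; rewrite /T' /Dg /T /Sq /tri /det2 /= !in_itv /=.
    move=> [/andP[? ?] /andP[? ?]].
    have [?|?] := ltP z.2 z.1; first by left; lra.
    have [?|?] := ltP z.1 z.2; first by right; left; lra.
    by right; right; split; [lra | split; apply/andP; split].
  by move=> [[? [? ?]]|[[? [? ?]]|[? [/andP[? ?] /andP[? ?]]]]];
    split; apply/andP; split; lra.
have TT' : T `&` (T' `|` Dg) = set0.
  by apply/seteqP; split => z // [+ [|[]]]; rewrite /T' /T /tri /det2 /=; lra.
have T'Dg : T' `&` Dg = set0.
  by apply/seteqP; split => z // [+ []]; rewrite /T' /T /tri /det2 /=; lra.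
have DgE : area Dg = 0%E.
  apply/eqP; rewrite eq_le measure_ge0 andbT -area_diagonal.
  by apply: le_area => //; [exact: measurable_diagonal | apply: subIsetl].
have := area_unit_square; rewrite -/Sq SqE areaU //; last exact: measurableU.
rewrite areaU // DgE adde0 area_swap //.
have : (0 <= area T)%E by exact: measure_ge0.
case: (area T) => [r| |] //= _ /eqP; rewrite -EFinD eqe => /eqP h.
by congr (_%:E); lra.
Qed.

Lemma tri_lin2 (a b c d : R) p q z : 0 < a * d - b * c ->
  tri (lin2 a b c d p) (lin2 a b c d q) (lin2 a b c d z) <-> tri p q z.
Proof.
move=> D0; rewrite /tri /= !det2_lin2 -mulrDr pmulr_rge0 // pmulr_rgt0 //.
by rewrite ler_pM2l.
Qed.

Lemma area_tri p q : 0 <= det2 p q -> area (tri p q) = (det2 p q / 2)%:E.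
Proof.
rewrite le_eqVlt => /orP[/eqP pq0|pq0].
  by rewrite tri0 -?pq0 // mul0r /area measure0.
set D := det2 p q in pq0 *; have D0 : D != 0 by rewrite gt_eqF.
pose L := lin2 ((q.2 - p.2) / D) ((p.1 - q.1) / D) (- p.2 / D) (p.1 / D).
have LD : (q.2 - p.2) / D * (p.1 / D) - (p.1 - q.1) / D * (- p.2 / D) = D^-1.
  by rewrite /D /det2; field.
have Lp : L p = (1, 0) by rewrite /L /lin2 /D /det2 /=; congr pair; field.
have Lq : L q = (1, 1) by rewrite /L /lin2 /D /det2 /=; congr pair; field.
have -> : tri p q = [set z | tri (1, 0) (1, 1) (L z)].
  by apply/seteqP; split => z /=; rewrite -Lp -Lq tri_lin2 // LD invr_gt0.
rewrite area_linear_preimage ?LD ?invr_neq0 //; last exact: measurable_tri.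
rewrite (_ : area _ = (1 / 2)%:E); last exact: area_tri_unit.
by rewrite -EFinM gtr0_norm ?invr_gt0 // invrK; congr (_%:E); field.
Qed.

End Triangles.

Section Kites.
Context {R : realType}.
Local Notation M2 := (measurableTypeR R * measurableTypeR R)%type.
Implicit Types (p q r z : R * R) (m n : R).

Definition cone p q : set M2 := [set z | 0 <= det2 p z /\ 0 < det2 z q].

Definition kite_apex p q m : R * R := ((p.1 + q.1) / m, (p.2 + q.2) / m).

Lemma det2_apexl p q m r : det2 (kite_apex p q m) r = (det2 p r + det2 q r) / m.
Proof. by rewrite /det2 /=; ring. Qed.

Lemma det2_apexr p q m r : det2 r (kite_apex p q m) = (det2 r p + det2 r q) / m.
Proof. by rewrite /det2 /=; ring. Qed.

Definition kite p q m : set M2 := tri p (kite_apex p q m) `|` tri (kite_apex p q m) q.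

Lemma kite_apexN p q m : kite_apex (- p) (- q) m = - kite_apex p q m.
Proof. by rewrite /kite_apex /= -!opprD !mulNr. Qed.

Lemma measurable_kite p q m : measurable (kite p q m).
Proof. by apply: measurableU; exact: measurable_tri. Qed.

Lemma tri_adjacent_disjoint p q r : tri p q `&` tri q r = set0.
Proof. by apply/seteqP; split => z // [[_ [+ _]] [+ _]]; rewrite det2C; lra. Qed.

Lemma kite_sub_cone p q m : 0 < m -> kite p q m `<=` cone p q.
Proof.
move=> m0 z; rewrite /kite /kite_apex /tri /cone /=.
rewrite det2_apexl det2_apexr (det2C z p) (det2C q z).
by case=> -[h1 [+ _]]; [|move: h1]; rewrite ?pmulr_lgt0 ?pmulr_lge0 ?invr_gt0 //; lra.
Qed.

Lemma kite0 p q m : 0 < m -> det2 p q <= 0 -> kite p q m = set0.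
Proof.
move=> m0 pq; rewrite /kite !tri0 ?setU0 // ?det2_apexl ?det2_apexr det2xx ?add0r ?addr0;
  by rewrite pmulr_lle0 ?invr_gt0.
Qed.

Lemma area_kite p q m : 0 < m -> 0 <= det2 p q -> area (kite p q m) = (det2 p q / m)%:E.
Proof.
move=> m0 pq; have pqm : 0 <= det2 p q / m by rewrite divr_ge0 // ltW.
have ap : det2 p (kite_apex p q m) = det2 p q / m by rewrite det2_apexr /det2; ring.
have aq : det2 (kite_apex p q m) q = det2 p q / m by rewrite det2_apexl /det2; ring.
rewrite /kite areaU ?tri_adjacent_disjoint //; try exact: measurable_tri.
rewrite !area_tri ?ap ?aq //.
by rewrite -EFinD; congr (_%:E); field; rewrite gt_eqF.
Qed.

Lemma cone_adjacent_disjoint p q r : cone p q `&` cone q r = set0.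
Proof. by apply/seteqP; split => z // [[_ +] [+ _]]; rewrite det2C; lra. Qed.

Lemma cone_opposite_disjoint p q p' q' : p + p' = 0 -> q + q' = 0 ->
  cone p q `&` cone p' q' = set0.
Proof.
move=> /(canRL (addKr p)) -> /(canRL (addKr q)) ->; rewrite !addr0.
by apply/seteqP; split => z // [[_ +] [_ +]]; rewrite det2Nr; lra.
Qed.

Lemma cone_skip_disjoint p q r p' : p + p' = 0 ->
  0 <= det2 p q -> 0 <= det2 q r -> 0 < det2 p r -> cone p q `&` cone r p' = set0.
Proof.
move=> /(canRL (addKr p)) ->; rewrite addr0 => pq qr pr.
apply/seteqP; split => z // [[pz zq] [rz]]; rewrite det2Nr det2C opprK => zp.
rewrite det2C in zq.
have : det2 q z * det2 p r < 0 by rewrite pmulr_llt0 //; lra.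
have : 0 <= det2 p z * det2 q r + det2 r z * det2 p q.
  by rewrite addr_ge0 // mulr_ge0 // ltW.
by rewrite -det2_cramer; lra.
Qed.

Lemma kite_adjacent_disjoint p q r m n : 0 < m -> 0 < n ->
  kite p q m `&` kite q r n = set0.
Proof.
by move=> m0 n0; apply: subsetI_eq0 (cone_adjacent_disjoint p q r);
  exact: kite_sub_cone.
Qed.

Lemma kite_opposite_disjoint p q p' q' m n : 0 < m -> 0 < n ->
  p + p' = 0 -> q + q' = 0 -> kite p q m `&` kite p' q' n = set0.
Proof.
by move=> m0 n0 pp qq; apply: subsetI_eq0 (cone_opposite_disjoint pp qq);
  exact: kite_sub_cone.
Qed.

Lemma kite_skip_disjoint p q r p' m n : 0 < m -> 0 < n -> p + p' = 0 ->
  0 <= det2 p q -> 0 <= det2 q r -> kite p q m `&` kite r p' n = set0.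
Proof.
move=> m0 n0 pp pq qr; have [pr|pr] := leP (det2 p r) 0.
  rewrite (kite0 n0) ?setI0 //.
  by move/(canRL (addKr p)): pp => ->; rewrite addr0 det2Nr det2C opprK.
by apply: subsetI_eq0 (cone_skip_disjoint pp pq qr pr); exact: kite_sub_cone.
Qed.

End Kites.

Lemma nesbitt {R : realFieldType} (a b c : R) : 0 <= a -> 0 <= b -> 0 <= c ->
  0 < b + c -> 0 < a + c -> 0 < a + b ->
  3 / 2 <= a / (b + c) + b / (a + c) + c / (a + b).
Proof.
move=> a0 b0 c0 bc ac ab; rewrite -subr_ge0.
have -> : a / (b + c) + b / (a + c) + c / (a + b) - 3 / 2 =
  ((a - b) ^+ 2 / ((b + c) * (a + c)) + (b - c) ^+ 2 / ((a + c) * (a + b))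
   + (a - c) ^+ 2 / ((b + c) * (a + b))) / 2.
  by field; rewrite ?gt_eqF.
by rewrite divr_ge0 // !addr_ge0 // divr_ge0 ?sqr_ge0 // mulr_ge0 // ltW.
Qed.

Section Hexagon.
Context {R : realType}.
Local Notation M2 := (measurableTypeR R * measurableTypeR R)%type.
Variables x0 x1 x2 : R * R.
Local Notation d0 := (det2 x0 x1).
Local Notation d1 := (det2 x1 x2).
Local Notation d2 := (det2 x0 x2).

Definition hexagon_kites : set M2 :=
  kite x0 x1 (d1 + d2) `|` kite x1 x2 (d0 + d2) `|` kite x2 (- x0) (d0 + d1)
  `|` kite (- x0) (- x1) (d1 + d2) `|` kite (- x1) (- x2) (d0 + d2)
  `|` kite (- x2) x0 (d0 + d1).

Lemma area_hexagon_kites : 0 <= d0 -> 0 <= d1 -> 0 <= d2 ->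
  0 < d1 + d2 -> 0 < d0 + d2 -> 0 < d0 + d1 ->
  area hexagon_kites = (2 * (d0 / (d1 + d2) + d1 / (d0 + d2) + d2 / (d0 + d1)))%:E.
Proof.
move=> d0_ge0 d1_ge0 d2_ge0 m0 m1 m2.
have e2 : det2 x2 (- x0) = d2 by rewrite det2Nr det2C opprK.
have e3 : det2 (- x0) (- x1) = d0 by rewrite det2Nl det2Nr opprK.
have e4 : det2 (- x1) (- x2) = d1 by rewrite det2Nl det2Nr opprK.
have e5 : det2 (- x2) x0 = d2 by rewrite det2Nl det2C opprK.
have h2 : 0 <= det2 x2 (- x0) by rewrite e2.
have h3 : 0 <= det2 (- x0) (- x1) by rewrite e3.
have h4 : 0 <= det2 (- x1) (- x2) by rewrite e4.
have h5 : 0 <= det2 (- x2) x0 by rewrite e5.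
rewrite /hexagon_kites.
set k0 := kite x0 x1 _; set k1 := kite x1 x2 _; set k2 := kite x2 (- x0) _.
set k3 := kite (- x0) (- x1) _; set k4 := kite (- x1) (- x2) _.
set k5 := kite (- x2) x0 _.
have D01 : k0 `&` k1 = set0 := kite_adjacent_disjoint _ _ _ m0 m1.
have D02 : k0 `&` k2 = set0 := kite_skip_disjoint m0 m2 (subrr x0) d0_ge0 d1_ge0.
have D03 : k0 `&` k3 = set0 := kite_opposite_disjoint m0 m0 (subrr x0) (subrr x1).
have D04 : k0 `&` k4 = set0.
  by rewrite setIC; exact: kite_skip_disjoint m1 m0 (addNr x1) h4 h5.
have D05 : k0 `&` k5 = set0 by rewrite setIC; exact: kite_adjacent_disjoint.
have D12 : k1 `&` k2 = set0 := kite_adjacent_disjoint _ _ _ m1 m2.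
have D13 : k1 `&` k3 = set0 := kite_skip_disjoint m1 m0 (subrr x1) d1_ge0 h2.
have D14 : k1 `&` k4 = set0 := kite_opposite_disjoint m1 m1 (subrr x1) (subrr x2).
have D15 : k1 `&` k5 = set0.
  by rewrite setIC; exact: kite_skip_disjoint m2 m1 (addNr x2) h5 d0_ge0.
have D23 : k2 `&` k3 = set0 := kite_adjacent_disjoint _ _ _ m2 m0.
have D24 : k2 `&` k4 = set0 := kite_skip_disjoint m2 m1 (subrr x2) h2 h3.
have D25 : k2 `&` k5 = set0 := kite_opposite_disjoint m2 m2 (subrr x2) (addNr x0).
have D34 : k3 `&` k4 = set0 := kite_adjacent_disjoint _ _ _ m0 m1.
have D35 : k3 `&` k5 = set0 := kite_skip_disjoint m0 m2 (addNr x0) h3 h4.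
have D45 : k4 `&` k5 = set0 := kite_adjacent_disjoint _ _ _ m1 m2.
have [A0 A1 A2] : [/\ area k0 = (d0 / (d1 + d2))%:E, area k1 = (d1 / (d0 + d2))%:E
  & area k2 = (d2 / (d0 + d1))%:E] by rewrite !area_kite ?e2.
have [A3 A4 A5] : [/\ area k3 = (d0 / (d1 + d2))%:E, area k4 = (d1 / (d0 + d2))%:E
  & area k5 = (d2 / (d0 + d1))%:E] by rewrite !area_kite ?e3 ?e4 ?e5.
have [mk0 mk1 mk2] : [/\ measurable k0, measurable k1 & measurable k2].
  by split; exact: measurable_kite.
have [mk3 mk4 mk5] : [/\ measurable k3, measurable k4 & measurable k5].
  by split; exact: measurable_kite.
clearbody k0 k1 k2 k3 k4 k5.
do 5 (rewrite areaU; try by [do ?apply: measurableU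
  | rewrite !setIUl ?D01 ?D02 ?D03 ?D04 ?D05 ?D12 ?D13 ?D14 ?D15 ?D23 ?D24 ?D25
      ?D34 ?D35 ?D45 ?setU0]).
by rewrite A0 A1 A2 A3 A4 A5 -!EFinD; congr (_%:E); ring.
Qed.

Lemma hexagon_area_ge3 (K : set M2) : measurable K ->
  (forall p q : R * R, K p -> K q -> tri p q `<=` K) ->
  (forall z : R * R, K z -> K (- z)) ->
  0 <= d0 -> 0 <= d1 -> 0 <= d2 -> 0 < d1 + d2 -> 0 < d0 + d2 -> 0 < d0 + d1 ->
  K x0 -> K x1 -> K x2 -> K (kite_apex x0 x1 (d1 + d2)) ->
  K (kite_apex x1 x2 (d0 + d2)) -> K (kite_apex x2 (- x0) (d0 + d1)) ->
  (3%:E <= area K)%E.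
Proof.
move=> mK Ktri KN d0_ge0 d1_ge0 d2_ge0 m0 m1 m2 Kx0 Kx1 Kx2 Ka0 Ka1 Ka2.
have Ka5 : K (kite_apex (- x2) x0 (d0 + d1)).
  by rewrite -[x0 in kite_apex _ x0]opprK kite_apexN; exact: KN.
have sub : hexagon_kites `<=` K.
  by rewrite /hexagon_kites /kite !subUset; do !split; apply: Ktri;
    rewrite ?kite_apexN; auto.
have mH : measurable hexagon_kites.
  by rewrite /hexagon_kites; do ?[exact: measurable_kite | apply: measurableU].
apply: le_trans (le_area mH mK sub).
rewrite area_hexagon_kites // lee_fin.
by have := nesbitt d0_ge0 d1_ge0 d2_ge0 m0 m1 m2; lra.
Qed.

End Hexagon.

Section Polar.
Context {R : realType}.
Local Notation M2 := (measurableTypeR R * measurableTypeR R)%type.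
Implicit Types (p q z : R * R) (W : set (R * R)).

Definition symp_polar W : set M2 := [set z | forall w, W w -> det2 z w <= 1].

Lemma symp_polarE W : symp_polar W = [set z | polar W (rot90 z)].
Proof.
by apply/seteqP; split => z Pz w /Pz; rewrite /dot2 /det2 /rot90 /=; lra.
Qed.

Lemma conv_hull_vertex n (v : 'I_n -> R * R) k : conv_hull v (v k).
Proof.
exists (fun i => (i == k)%:R); split.
- by move=> i; rewrite ler0n.
- by rewrite (bigD1 k) //= eqxx big1 ?addr0 // => i /negbTE ->.
- have sum_k (f : R * R -> R) : \sum_(i < n) (i == k)%:R * f (v i) = f (v k).
    rewrite (bigD1 k) //= eqxx mul1r big1 ?addr0 // => i /negbTE ->.
    by rewrite mul0r.
  by rewrite (sum_k fst) (sum_k snd); case: (v k).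
Qed.

Lemma polar_conv_hull n (v : 'I_n -> R * R) : polar (conv_hull v) = polar (range v).
Proof.
apply/seteqP; split=> z Pz y.
  by case=> k _ <-; apply: Pz; exact: conv_hull_vertex.
case=> l [l0 l1 ->]; rewrite /dot2 /= !mulr_suml -big_split /= -l1.
apply: ler_sum => i _; rewrite -!mulrA -mulrDr -[leRHS]mulr1 ler_wpM2l //.
by apply: Pz; exists i.
Qed.

Lemma rot90_sub_polar_det2 n (v : 'I_n -> R * R) a b :
  rot90 @` conv_hull v `<=` polar (conv_hull v) -> det2 (v a) (v b) <= 1.
Proof.
move=> /(_ _ (ex_intro2 _ _ _ (conv_hull_vertex v a) erefl) _ (conv_hull_vertex v b)).
by rewrite /dot2 /det2 /rot90 /=; lra.
Qed.

Lemma polar_subset W W' : W `<=` W' -> polar W' `<=` polar W.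
Proof. by move=> WW' z Pz w /WW'; exact: Pz. Qed.

Lemma measurable_polar_range (T : finType) (w : T -> R * R) :
  measurable (polar (range w) : set M2).
Proof.
have -> : (polar (range w) : set M2) =
    \bigcap_(s in [set: T]) [set z : M2 | (w s).1 * z.1 + (w s).2 * z.2 <= 1].
  apply/seteqP; split => z Pz s => [_|]; first exact: Pz.
  by case=> t _ <-; exact: (Pz t).
apply: fin_bigcap_measurable; first exact: finite_finset.
by move=> s _; exact: measurable_halfplane_le.
Qed.

Lemma measurable_symp_polar W : measurable (polar W : set M2) ->
  measurable (symp_polar W).
Proof.
move=> mP; rewrite symp_polarE.
have := measurable_preimage (measurable_lin2 0 (-1) 1 0) mP.
by congr measurable; apply/seteqP; split => z; rewrite /lin2 /rot90 /= !mul0r !mul1r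
  mulN1r add0r addr0.
Qed.

Lemma area_symp_polar W : measurable (polar W : set M2) ->
  area (symp_polar W) = area (polar W).
Proof.
move=> mP; have := @area_linear_preimage R 0 (-1) 1 0 _ _ mP.
rewrite !mul0r sub0r mulN1r opprK oner_neq0 normr1 invr1 mul1e => /(_ isT) <-.
by rewrite symp_polarE; congr area; apply/seteqP; split => z;
  rewrite /lin2 /rot90 /= !mul0r !mul1r mulN1r add0r addr0.
Qed.

Lemma symp_polar_tri W p q :
  symp_polar W p -> symp_polar W q -> tri p q `<=` symp_polar W.
Proof.
move=> Pp Pq z [pz [zq pzq]] w Ww; have pq : 0 < det2 p q by lra.
rewrite -(ler_pM2r pq) mul1r det2_cramer.
apply: le_trans (_ : 1 * det2 z q + 1 * det2 p z <= _); last lra.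
by apply: lerD; apply: ler_wpM2r; by [| exact: ltW | apply: Pp | apply: Pq].
Qed.

Lemma symp_polar_apex W p q m : 0 < m ->
  (forall w, W w -> det2 p w + det2 q w <= m) -> symp_polar W (kite_apex p q m).
Proof. by move=> m0 pqm w /pqm; rewrite det2_apexl ler_pdivrMr // mul1r. Qed.

Lemma symp_polarN W z :
  (forall w, W w -> W (- w)) -> symp_polar W z -> symp_polar W (- z).
Proof. by move=> WN Pz w /WN /Pz; rewrite /det2 /=; lra. Qed.

End Polar.

Section MaxHexagon.
Context {R : realType}.

(* The area of the hexagon with vertices x0, x1, x2, -x0, -x1, -x2. *)
Definition sym_hexagon_area (x0 x1 x2 : R * R) : R :=
  det2 x0 x1 + det2 x1 x2 + det2 x0 x2.

Lemma symp_polar_range_area_ge3 (T : finType) (w : T -> R * R) :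
  (forall s, exists t, w t = - w s) ->
  (forall s t, det2 (w s) (w t) <= 1) ->
  (exists s t, det2 (w s) (w t) != 0) ->
  (3%:E <= area (symp_polar (range w)))%E.
Proof.
move=> wN wdet [s [t st]].
pose F (i : T * T * T) := sym_hexagon_area (w i.1.1) (w i.1.2) (w i.2).
have [[[s0 s1] s2] _ Fmax] := @arg_maxP _ R _ (s, s, s) xpredT F isT.
have {Fmax} wmax u0 u1 u2 :
    sym_hexagon_area (w u0) (w u1) (w u2) <= sym_hexagon_area (w s0) (w s1) (w s2).
  exact: (Fmax (u0, u1, u2)).
have S_gt0 : 0 < sym_hexagon_area (w s0) (w s1) (w s2).
  have := wmax s t t; have := wmax t s s.
  rewrite /sym_hexagon_area !det2xx (det2C (w s) (w t)).
  by move: st; rewrite neq_lt => /orP[]; lra.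
(* Degenerate competitors give 2 d_i <= d0 + d1 + d2. *)
have := wmax s0 s1 s1; have := wmax s1 s1 s2; have := wmax s0 s0 s2.
move: S_gt0; rewrite /sym_hexagon_area !det2xx => S_gt0 d2_le d1_le d0_le.
have wsym y : range w y -> range w (- y).
  by case=> u _ <-; have [u' wu'] := wN u; exists u'.
have Kw u : symp_polar (range w) (w u) by move=> _ [v _ <-]; exact: wdet.
apply: (@hexagon_area_ge3 _ (w s0) (w s1) (w s2)); try lra; try exact: Kw.
- apply: measurable_symp_polar; exact: measurable_polar_range.
- exact: symp_polar_tri.
- by move=> z; apply: symp_polarN wsym.
- apply: symp_polar_apex; first lra.
  by move=> _ [u _ <-]; have := wmax s0 s1 u; rewrite /sym_hexagon_area; lra.
- apply: symp_polar_apex; first lra.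
  move=> _ [u _ <-]; have [u' wu'] := wN u; have := wmax u' s1 s2.
  by rewrite /sym_hexagon_area wu' !det2Nl !(det2C _ (w u)); lra.
- apply: symp_polar_apex; first lra.
  move=> _ [u _ <-]; have [u' wu'] := wN u; have := wmax s0 u' s2.
  by rewrite /sym_hexagon_area wu' !det2Nl !det2Nr !(det2C _ (w u)); lra.
Qed.

End MaxHexagon.

Theorem lemma4 (R : realType) (Q : set (R * R)) :
  convex_polygon Q ->
  rot90 @` Q `<=` polar Q ->
  (3%:E <= area (polar Q))%E.
Proof.
move=> [n [v [-> [i [j [k ijk]]]]]] Qrot.
have [a [b ab]] := exists_det2_neq0 (v := v) ijk.
have vdet c d : det2 (v c) (v d) <= 1 := rot90_sub_polar_det2 c d Qrot.
pose w (s : 'I_n * bool) := if s.2 then v s.1 else - v s.1.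
have wN s : exists t, w t = - w s.
  by exists (s.1, ~~ s.2); rewrite /w; case: s.2; rewrite ?opprK.
have wdet s t : det2 (w s) (w t) <= 1.
  have := vdet s.1 t.1; have := vdet t.1 s.1; rewrite (det2C (v s.1)) /w.
  by case: s.2; case: t.2; rewrite ?det2Nl ?det2Nr ?opprK; lra.
have wab : exists s t, det2 (w s) (w t) != 0 by exists (a, true), (b, true).
rewrite polar_conv_hull; apply: le_trans (symp_polar_range_area_ge3 wN wdet wab) _.
rewrite area_symp_polar; last exact: measurable_polar_range.
apply: le_area; try exact: measurable_polar_range.
by apply: polar_subset => _ [c _ <-]; exists (c, true).
Qed.
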